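(* For every $\ell\ge 3$ there exists an $\ell$-core whose classes have total size at most $2\ell+1$, each class having size at most $3$ (and at least $1$). More precisely, there exist $\ell$-cores of the following types: $(1,2,\dots,2,1)$ if $\ell\equiv 1\pmod 4$; $(2,\dots,2,1)$ if $\ell\equiv 0\pmod 4$; $(2,\dots,2)$ if $\ell\equiv 3\pmod 4$; $(2,2,3,2,\dots,2)$ if $\ell\equiv 2\pmod 4$.
   Context: For $p\ge 3$, a $p$-core of type $(x_1,\dots,x_p)$ consists of pairwise disjoint finite sets $C_1,\dots,C_p$ (the classes) with $|C_i|=x_i$, together with sets $B_1,\dots,B_p\subseteq C_1\cup\dots\cup C_p$ such that $B_1\cup\dots\cup B_p=C_1\cup\dots\cup C_p$, and: (i) $B_i\cap C_i=\emptyset$ and $|B_i\cap C_j|=1$ for all $j\ne i$ (so $|B_i|=p-1$); (ii) $|B_i\cap B_j|+p$ is odd for all $1\le i,j\le p$. *)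

From mathcomp Require Import all_boot.
Set Implicit Arguments. Unset Strict Implicit. Unset Printing Implicit Defensive.

(* A p-core of type x : 'I_p -> nat (classes indexed 0..p-1 instead of 1..p),
   realised inside an arbitrary finite ground type T:
   classes C i, sets B i. *)
Definition is_core (p : nat) (T : finType) (C B : 'I_p -> {set T})
    (x : 'I_p -> nat) : Prop :=
  (forall i j : 'I_p, i != j -> [disjoint C i & C j]) /\
      (forall i : 'I_p, #|C i| = x i) /\
      \bigcup_(i < p) B i = \bigcup_(i < p) C i /\
      (forall i : 'I_p, B i :&: C i = set0) /\
      (forall i j : 'I_p, i != j -> #|B i :&: C j| = 1) /\
    (forall i j : 'I_p, odd (#|B i :&: B j| + p)).

Definition thm_type (l i : nat) : nat :=
  match l %% 4 with
  | 1 => if (i == 0) || (i == l.-1) then 1 else 2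
  | 0 => if i == l.-1 then 1 else 2
  | 3 => 2
  | _ => if i == 2 then 3 else 2
  end.

From mathcomp Require Import all_boot zify.
Set Implicit Arguments. Unset Strict Implicit. Unset Printing Implicit Defensive.

(* A core with classes of size at most 3 is encoded by a matrix f: class k
   is {k} x {0, ..., x_k - 1} and B_i takes the element (k, f k i) from every
   other class k.  Then |B_i :&: B_j| is the number of rows on which columns
   i and j agree, and modulo 2 an agreement [a = b] equals
   1 + [a <> 0] + [b <> 0], up to a correction when a and b are two distinct
   nonzero values.  Hence the parity condition only involves the numbers of
   nonzero entries of the columns and the two entries f i j, f j i.  For each
   residue of l modulo 4 the matrix is the staircase f k i = (i < k) xor (i odd)
   with a few boundary rows and columns adjusted to produce the classes of
   size 1 or 3; its column weights are read off by splitting the rows into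
   intervals. *)

Lemma eq_sum_nat m n (P Q : pred nat) (F G : nat -> nat) :
    (forall k, m <= k < n -> P k = Q k) ->
    (forall k, m <= k < n -> Q k -> F k = G k) ->
  \sum_(m <= k < n | P k) F k = \sum_(m <= k < n | Q k) G k.
Proof.
move=> PQ FG; rewrite big_nat_cond [RHS]big_nat_cond.
apply: eq_big => [k | k /andP[kmn Pk]]; first exact/andb_id2l/PQ.
by apply: FG; rewrite -?PQ.
Qed.

Lemma sum_nat_restrict a a' b' b (P : pred nat) (F : nat -> nat) :
    a <= a' -> a' <= b' -> b' <= b ->
    (forall k, a <= k < b -> P k -> (k < a') || (b' <= k) -> F k = 0) ->
  \sum_(a <= k < b | P k) F k = \sum_(a' <= k < b' | P k) F k.
Proof.
move=> aa' a'b' b'b F0.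
rewrite (big_cat_nat (n := a')) ?(leq_trans a'b') //.
rewrite (big_cat_nat (m := a') (n := b')) //=.
have out0 c d : a <= c -> d <= b -> (forall k, c <= k < d -> (k < a') || (b' <= k)) ->
    \sum_(c <= k < d | P k) F k = 0.
  move=> ac db out; rewrite big_nat_cond big1 // => k /andP[kcd Pk].
  by apply: F0 (out k kcd) => //; lia.
by rewrite (out0 a a') ?(out0 b' b) ?add0n ?addn0 // => *; lia.
Qed.

Lemma sum_nat_drop l i (P : pred nat) (F : nat -> nat) : i < l -> P i ->
  \sum_(0 <= k < l | P k) F k = F i + \sum_(0 <= k < l | P k && (k != i)) F k.
Proof. by move=> il Pi; rewrite !big_mkord (bigD1 (Ordinal il)). Qed.

Lemma sum_odd a b : a <= b -> \sum_(a <= k < b) odd k = b./2 - a./2.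
Proof.
elim: b => [|b IHb]; first by rewrite leqn0 => /eqP ->; rewrite big_geq.
rewrite leq_eqVlt => /orP[/eqP <- | ab]; first by rewrite big_geq // subnn.
rewrite big_nat_recr //= IHb //; lia.
Qed.

Lemma sum_even a b : a <= b -> \sum_(a <= k < b) ~~ odd k = (b - a) - (b./2 - a./2).
Proof.
move=> ab; have : \sum_(a <= k < b) (~~ odd k + odd k) = b - a.
  by rewrite (eq_bigr (fun=> 1)) ?sum_nat_const_nat ?muln1 // => k _; case: (odd k).
by rewrite big_split sum_odd //=; lia.
Qed.

Definition agreement l (f : nat -> nat -> nat) i j : nat :=
  \sum_(0 <= k < l | (k != i) && (k != j)) (f k i == f k j).

Definition col_weight l (f : nat -> nat -> nat) i : nat :=
  \sum_(0 <= k < l | k != i) (f k i != 0).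

Definition clash l (f : nat -> nat -> nat) i j : nat :=
  \sum_(0 <= k < l | (k != i) && (k != j)) [&& f k i != 0, f k j != 0 & f k i != f k j].

Lemma agreementC l f i j : agreement l f i j = agreement l f j i.
Proof. by apply: eq_big => [k | k _]; rewrite 1?andbC // eq_sym. Qed.

Lemma eq_mod2 (a b : nat) :
  (a == b) + (a != 0) + (b != 0) + [&& a != 0, b != 0 & a != b] =
    1 + 2 * ((a != 0) && (b != 0)).
Proof. by case: a b => [|a] [|b] //=; case: eqVneq. Qed.

Lemma odd_agreement l f i j : i < l -> j < l -> i != j ->
  odd (agreement l f i j + l) =
  odd (col_weight l f i) (+) odd (col_weight l f j) (+) (f j i != 0) (+) (f i j != 0)
    (+) odd (clash l f i j).
Proof.
move=> il jl ij.
have sum_mod2 : agreement l f i j + \sum_(0 <= k < l | (k != i) && (k != j)) (f k i != 0)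
    + \sum_(0 <= k < l | (k != i) && (k != j)) (f k j != 0) + clash l f i j
  = \sum_(0 <= k < l | (k != i) && (k != j)) 1
    + 2 * \sum_(0 <= k < l | (k != i) && (k != j)) ((f k i != 0) && (f k j != 0)).
  by rewrite big_distrr -!big_split; apply: eq_bigr => k _; apply: eq_mod2.
have wi : col_weight l f i =
    (f j i != 0) + \sum_(0 <= k < l | (k != i) && (k != j)) (f k i != 0).
  by rewrite /col_weight (sum_nat_drop _ jl) // eq_sym.
have wj : col_weight l f j =
    (f i j != 0) + \sum_(0 <= k < l | (k != i) && (k != j)) (f k j != 0).
  rewrite /col_weight (sum_nat_drop _ il) //.
  by congr (_ + _); apply: eq_bigl => k; rewrite andbC.
have ll : l = 2 + \sum_(0 <= k < l | (k != i) && (k != j)) 1.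
  rewrite -[in LHS](muln1 l) -[l in l * 1]subn0 -sum_nat_const_nat.
  rewrite (sum_nat_drop (P := xpredT) _ il) //.
  by rewrite (sum_nat_drop (P := fun k => k != i) _ jl) 1?eq_sym.
move: sum_mod2 wi wj ll; move: (f j i != 0) (f i j != 0) => b1 b2; lia.
Qed.

Lemma clash_le1 (a b : nat) : a <= 1 -> b <= 1 -> [&& a != 0, b != 0 & a != b] = false.
Proof. by case: a b => [|[|]] [|[|]]. Qed.

Lemma clash_bool l (g : nat -> nat -> bool) i j : clash l g i j = 0.
Proof. by rewrite /clash big1 // => k _; rewrite clash_le1 ?leq_b1. Qed.

Lemma col_weight_bool l (g : nat -> nat -> bool) i :
  col_weight l g i = \sum_(0 <= k < l | k != i) g k i.
Proof. by apply: eq_bigr => k _; case: (g k i). Qed.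

Lemma bool_neq0 (b : bool) : (b != 0 :> nat) = b.
Proof. by case: b. Qed.

Lemma card_ord_pred l (P : pred nat) :
  #|[set k : 'I_l | P k]| = \sum_(0 <= k < l | P k) 1.
Proof. by rewrite big_mkord sum1_card; apply: eq_card => k; rewrite inE. Qed.

Definition has_core l (x : nat -> nat) : Prop :=
  exists (T : finType) (C B : 'I_l -> {set T}), is_core C B (fun i : 'I_l => x i).

Section CoreOfMatrix.

Variables (l : nat) (x : nat -> nat) (f : nat -> nat -> nat).
Hypothesis x_le3 : forall k, k < l -> x k <= 3.
Hypothesis f_lt : forall k i, k < l -> i < l -> k != i -> f k i < x k.
Hypothesis f_onto :
  forall k c, k < l -> c < x k -> exists2 i, i < l & (i != k) && (f k i == c).
Hypothesis odd_agreements : forall i j, i < j < l -> odd (agreement l f i j + l).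

Definition matrix_class (k : 'I_l) : {set 'I_l * 'I_3} :=
  [set u : 'I_l * 'I_3 | (u.1 == k) && (u.2 < x k)].

Definition matrix_block (i : 'I_l) : {set 'I_l * 'I_3} :=
  [set u : 'I_l * 'I_3 | (u.1 != i) && (u.2 == f u.1 i :> nat)].

Lemma f_lt3 (k i : 'I_l) : k != i -> f k i < 3.
Proof. by move=> ki; apply: leq_trans (x_le3 (ltn_ord k)); apply: f_lt. Qed.

Lemma card_matrix_class k : #|matrix_class k| = x k.
Proof.
have xk3 := x_le3 (ltn_ord k).
have -> : matrix_class k = [set (k, widen_ord xk3 c) | c : 'I_(x k)].
  apply/setP => -[k' c]; rewrite !inE /=.
  apply/andP/imsetP => [[/eqP -> ck] | [c' _ [-> ->]]]; last by rewrite /= ltn_ord.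
  by exists (Ordinal ck); rewrite // (_ : widen_ord _ _ = c) //; apply: val_inj.
by rewrite card_imset ?cardsT ?card_ord // => c c' [/val_inj].
Qed.

Lemma card_matrix_blockI i j : #|matrix_block i :&: matrix_block j| = agreement l f i j.
Proof.
have fst_inj : {in matrix_block i :&: matrix_block j &, injective (@fst 'I_l 'I_3)}.
  move=> [k c] [k' c'] /[!inE] /= /andP[/andP[_ /eqP kc] _] /andP[/andP[_ /eqP kc'] _] /= kk'.
  by subst k'; congr pair; apply: val_inj; rewrite /= kc kc'.
rewrite -(card_in_imset fst_inj).
have -> : fst @: (matrix_block i :&: matrix_block j)
    = [set k : 'I_l | (k != i :> nat) && (k != j :> nat) && (f k i == f k j)].
  apply/setP => k; rewrite inE; apply/imsetP/idP => [[[k' c]] | /andP[/andP[ki kj] /eqP fk]].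
    rewrite !inE /= => /andP[/andP[ki /eqP fi] /andP[kj /eqP fj]] ->.
    by rewrite /= -fi -fj eqxx andbT; apply/andP.
  exists (k, Ordinal (f_lt3 ki)) => //.
  by rewrite !inE /= ki kj /= -fk !eqxx.
rewrite (@card_ord_pred _ (fun k => (k != i) && (k != j) && (f k i == f k j))).
by rewrite /agreement big_mkcondr; apply: eq_bigr => k _; case: (_ == _).
Qed.

Lemma agreement_diag i : i < l -> agreement l f i i = l.-1.
Proof.
move=> il; have := sum_nat_const_nat 0 l 1.
rewrite subn0 muln1 (sum_nat_drop (P := xpredT) _ il) //= => sum_l.
rewrite -[in RHS]sum_l add1n /agreement.
by apply: eq_big => [k | k _]; [exact: andbb | rewrite eqxx].
Qed.

Lemma has_core_of_matrix : has_core l x.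
Proof.
exists _, matrix_class, matrix_block.
split=> [i j ij | ]; last split=> [i | ]; last split; last split=> [i | ];
  last split=> [i j ij | i j].
- rewrite -setI_eq0; apply/eqP/setP => -[k c]; rewrite !inE /=.
  by apply/negbTE; apply: contra ij => /andP[/andP[/eqP <- _] /andP[/eqP -> _]].
- exact: card_matrix_class.
- apply/setP => -[k c]; apply/bigcupP/bigcupP => -[i _]; rewrite !inE /=.
    move=> /andP[ki /eqP fc]; exists k; rewrite // inE /= eqxx fc /=.
    exact: f_lt.
  move=> /andP[/eqP -> ci]; have [j jl /andP[ji /eqP fij]] := f_onto (ltn_ord i) ci.
  by exists (Ordinal jl); rewrite // inE /= fij eqxx andbT; apply: contra ji => /eqP ->.
- apply/setP => -[k c]; rewrite !inE /=.
  by apply/negbTE; rewrite negb_and; case: eqP => [->|]; rewrite ?eqxx ?orbT.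
- rewrite eq_sym in ij.
  have -> : matrix_block i :&: matrix_class j = [set (j, Ordinal (f_lt3 ij))].
    apply/setP => -[k c]; rewrite !inE /= xpair_eqE -[c == _]val_eqE /=.
    apply/andP/andP => [[/andP[_ /eqP fc] /andP[/eqP kj _]] | [/eqP kj /eqP fc]]; subst k.
      by rewrite fc eqxx.
    by rewrite fc ij !eqxx; split=> //; apply: f_lt.
  exact: cards1.
- rewrite card_matrix_blockI.
  case: (ltngtP i j) => [ij | ji | ->].
  + by apply: odd_agreements; rewrite ij /=.
  + by rewrite agreementC; apply: odd_agreements; rewrite ji /=.
  + by rewrite agreement_diag //; have := ltn_ord j; lia.
Qed.

End CoreOfMatrix.

Lemma onto01 l (f : nat -> nat -> nat) k c : c < 2 ->
    (forall b : bool, exists2 i, i < l & (i != k) && (f k i == b)) ->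
  exists2 i, i < l & (i != k) && (f k i == c).
Proof.
move=> c2 /(_ (c == 1)) [i il /andP[ik /eqP fi]]; exists i => //.
by rewrite ik fi; case: c c2 {fi} => [|[|]].
Qed.

Definition stair (k i : nat) : bool := (i < k) (+) odd i.

Lemma sum_stair a b i : a <= i < b ->
  \sum_(a <= k < b | k != i) stair k i = if odd i then i - a else b - i.+1.
Proof.
move=> /andP[ai ib]; rewrite (big_cat_nat (n := i)) ?(ltnW ib) //=.
rewrite (big_ltn_cond (m := i)) // eqxx /=.
rewrite (eq_sum_nat (Q := xpredT) (G := fun=> nat_of_bool (odd i))); first last.
- by move=> k /andP[_ ki] _; rewrite /stair ltnNge ltnW.
- by move=> k /andP[_ ki]; rewrite ltn_eqF.
rewrite [X in _ + X](eq_sum_nat (Q := xpredT) (G := fun=> nat_of_bool (~~ odd i))); first last.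
- by move=> k /andP[ik _] _; rewrite /stair ik.
- by move=> k /andP[ik _]; rewrite gtn_eqF.
by rewrite !sum_nat_const_nat; case: (odd i); rewrite ?muln1 ?muln0 ?addn0.
Qed.

Lemma stair_onto k b : exists2 i, i < 3 & (i != k) && (stair k i == b).
Proof.
case: k => [|[|k]]; first by case: b; [exists 1 | exists 2].
  by case: b; [exists 0 | exists 2].
by case: b; [exists 0 | exists 1].
Qed.

Lemma odd_agreements_stair l : l %% 4 = 3 ->
  forall i j, i < j < l -> odd (agreement l stair i j + l).
Proof.
move=> l4 i j /andP[ij jl]; have il := ltn_trans ij jl.
rewrite odd_agreement ?(ltn_eqF ij) // clash_bool !col_weight_bool !bool_neq0.
rewrite !sum_stair ?il ?jl // /stair ij ltnNge (ltnW ij) /=.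
by case oi: (odd i); case oj: (odd j) => /=; lia.
Qed.

Lemma has_core_stair l : 3 <= l -> l %% 4 = 3 -> has_core l (thm_type l).
Proof.
move=> l3 l4; have x2 k : thm_type l k = 2 by rewrite /thm_type l4.
apply: (has_core_of_matrix (f := stair)) => [k _ | k i _ _ _ | k c kl | ]; rewrite ?x2 //.
- by case: (stair k i).
- move=> c2; apply: (onto01 (f := stair)) => // b.
  have [i i3 /andP[ik /eqP <-]] := stair_onto k b.
  by exists i; [lia | rewrite ik eqxx].
- exact: odd_agreements_stair.
Qed.

Definition stair_last l (k i : nat) : bool :=
  if k == l.-1 then false else if i == l.-1 then odd k else stair k i.

Lemma col_weight_stair_last l i : i < l ->
  col_weight l (stair_last l) i =
    if i == l.-1 then (l.-1)./2 else if odd i then i else l.-1 - i.+1.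
Proof.
move=> il; rewrite col_weight_bool (sum_nat_restrict (a' := 0) (b' := l.-1)) ?leq_pred //;
  last by move=> k kl _ kl'; rewrite /stair_last ifT //; lia.
have [-> | ni] := eqVneq i l.-1.
  rewrite (eq_sum_nat (Q := xpredT) (G := odd)) ?sum_odd ?subn0 // => k /andP[_ kl].
    by rewrite ltn_eqF.
  by rewrite /stair_last eqxx ltn_eqF.
rewrite (eq_sum_nat (Q := fun k => k != i) (G := fun k => stair k i)) ?sum_stair ?subn0 //.
  lia.
by move=> k /andP[_ kl] _; rewrite /stair_last (ltn_eqF kl) (negbTE ni).
Qed.

Lemma odd_agreements_stair_last l : l %% 4 = 0 ->
  forall i j, i < j < l -> odd (agreement l (stair_last l) i j + l).
Proof.
move=> l4 i j /andP[ij jl]; have il := ltn_trans ij jl.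
rewrite odd_agreement ?(ltn_eqF ij) // clash_bool !col_weight_stair_last // !bool_neq0.
have il1 : i < l.-1 by lia.
rewrite /stair_last /stair ij ltnNge (ltnW ij) (ltn_eqF il1) /=.
by case: eqP => _; case oi: (odd i) => /=; try lia; case oj: (odd j) => /=; lia.
Qed.

Lemma has_core_stair_last l : 3 <= l -> l %% 4 = 0 -> has_core l (thm_type l).
Proof.
move=> l3 l4; have x12 k : thm_type l k = if k == l.-1 then 1 else 2 by rewrite /thm_type l4.
apply: (has_core_of_matrix (f := stair_last l)) => [k _ | k i _ _ _ | k c kl | ];
  rewrite ?x12.
- by case: ifP.
- by rewrite /stair_last; case: (k == l.-1) => //; case: (if _ then _ else _).
- have [-> | kl1] := eqVneq k l.-1.
    by move=> c_lt; exists 0; [lia | rewrite /stair_last eqxx; lia].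
  move=> c_lt; apply: (onto01 (f := stair_last l)) => // b.
  have [i i3 /andP[ik /eqP <-]] := stair_onto k b.
  by exists i; [lia | rewrite ik /stair_last (negbTE kl1) ifF //; lia].
- exact: odd_agreements_stair_last.
Qed.

Definition stair_ends l (k i : nat) : bool :=
  if (k == 0) || (k == l.-1) then false
  else if i == 0 then odd k else if i == l.-1 then ~~ odd k else stair k i.

Lemma col_weight_stair_ends l i : 2 <= l -> i < l ->
  col_weight l (stair_ends l) i =
    if i == 0 then (l.-1)./2 else if i == l.-1 then l.-2 - (l.-1)./2
    else if odd i then i.-1 else l.-1 - i.+1.
Proof.
move=> l2 il; have ends0 k : 0 <= k < l -> k != i -> (k < 1) || (l.-1 <= k) ->
    stair_ends l k i = 0 :> nat.
  by move=> kl _ kl'; rewrite /stair_ends ifT //; lia.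
rewrite col_weight_bool (sum_nat_restrict _ _ _ ends0) //; try lia.
have [-> | i0] := eqVneq i 0.
  rewrite (eq_sum_nat (Q := xpredT) (G := odd)) => [| k kl | k kl _].
  - by rewrite sum_odd ?subn0; lia.
  - by rewrite gtn_eqF //; lia.
  - by rewrite /stair_ends ifF ?eqxx //; lia.
have [-> | il1] := eqVneq i l.-1.
  rewrite (eq_sum_nat (Q := xpredT) (G := fun k => ~~ odd k)) => [| k kl | k kl _].
  - by rewrite sum_even ?subn0; lia.
  - by rewrite ltn_eqF //; lia.
  - by rewrite /stair_ends ifF 1?ifF ?eqxx //; lia.
rewrite (eq_sum_nat (Q := fun k => k != i) (G := fun k => stair k i)) => [| // | k kl _].
- by rewrite sum_stair; case: (odd i); lia.
- by rewrite /stair_ends ifF ?(negbTE i0) ?(negbTE il1) //; lia.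
Qed.

Lemma odd_agreements_stair_ends l : l %% 4 = 1 ->
  forall i j, i < j < l -> odd (agreement l (stair_ends l) i j + l).
Proof.
move=> l4 i j /andP[ij jl]; have il := ltn_trans ij jl.
rewrite odd_agreement ?(ltn_eqF ij) // clash_bool !col_weight_stair_ends ?bool_neq0 //;
  try lia.
have [j0 il1] : (j == 0) = false /\ (i == l.-1) = false by split; lia.
rewrite /stair_ends /stair j0 il1 ij ltnNge (ltnW ij) /=.
have [i0 | i0] := eqVneq i 0; have [jl1 | jl1] := eqVneq j l.-1 => /=;
  by case oi: (odd i); case oj: (odd j) => /=; lia.
Qed.

Lemma has_core_stair_ends l : 3 <= l -> l %% 4 = 1 -> has_core l (thm_type l).
Proof.
move=> l3 l4.
have x12 k : thm_type l k = if (k == 0) || (k == l.-1) then 1 else 2 by rewrite /thm_type l4.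
apply: (has_core_of_matrix (f := stair_ends l)) => [k _ | k i _ _ _ | k c kl | ];
  rewrite ?x12.
- by case: ifP.
- by rewrite /stair_ends; case: ifP => //; case: (if _ then _ else _).
- case: ifP => [k_end c_lt | k_mid c_lt].
    by exists 1; [lia | rewrite /stair_ends k_end; lia].
  apply: (onto01 (f := stair_ends l)) => // b; have [bk | bk] := eqVneq b (odd k).
    by exists 0; [lia | rewrite /stair_ends k_mid eqxx bk; lia].
  exists l.-1; [lia | rewrite /stair_ends k_mid ifF ?eqxx; last lia].
  by apply/andP; split; [lia | move: bk; case: b; case: (odd k)].
- exact: odd_agreements_stair_ends.
Qed.

(* Rows and columns 0, 1, 2 of the matrix for l = 2 (mod 4); class 2 is the
   one of size 3. *)
Definition corner (k i : nat) : nat :=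
  match k, i with 0, 1 | 1, 0 | 2, 0 => 1 | 2, 1 => 2 | _, _ => 0 end.

Definition stair_triple (k i : nat) : nat :=
  if 3 <= k then nat_of_bool (if 3 <= i then stair k i else odd k)
  else if 3 <= i then 0 else corner k i.

Lemma stair_triple_le1 k i : k != 2 -> stair_triple k i <= 1.
Proof.
rewrite /stair_triple; case: ifP => [_ _ | /negbT k3]; first exact: leq_b1.
by case: ifP => // _; case: k k3 => [|[|[|]]] //; case: i => [|[|]].
Qed.

Lemma col_weight_stair_triple l i : 3 <= l -> i < l ->
  col_weight l stair_triple i =
    if i < 3 then (i != 2).*2 + (l./2 - 1) else if odd i then i - 3 else l - i.+1.
Proof.
move=> l3 il; rewrite /col_weight (big_cat_nat (n := 3)) //=.
case: ltnP => [i3 | i3].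
  congr (_ + _); first by case: i i3 {il} => [|[|[|]]] //; rewrite unlock.
  rewrite (eq_sum_nat (Q := xpredT) (G := odd)) => [| k /andP[k3 _] | k /andP[k3 _] _].
  - by rewrite sum_odd.
  - by rewrite gtn_eqF //; lia.
  - by rewrite /stair_triple k3 leqNgt i3; case: (odd k).
rewrite big_nat_cond big1 ?add0n => [| k /andP[/andP[_ k3] _]]; last first.
  by rewrite /stair_triple leqNgt k3 i3.
rewrite (eq_sum_nat (Q := fun k => k != i) (G := fun k => stair k i))
  => [| // | k /andP[k3 _] _]; first by rewrite sum_stair ?i3.
by rewrite /stair_triple k3 i3; case: (stair k i).
Qed.

Lemma clash_stair_triple l i j : 3 <= l -> i < j ->
  clash l stair_triple i j = (i == 0) && (j == 1).
Proof.
move=> l3 ij; rewrite /clash (sum_nat_restrict (a' := 2) (b' := 3)) //; last first.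
  by move=> k _ _ k2; rewrite clash_le1 // stair_triple_le1 //; lia.
rewrite big_ltn_cond // big_geq // /stair_triple.
by case: i j ij => [|[|[|i]]] [|[|[|j]]].
Qed.

Lemma odd_agreements_stair_triple l : 3 <= l -> l %% 4 = 2 ->
  forall i j, i < j < l -> odd (agreement l stair_triple i j + l).
Proof.
move=> l3 l4 i j /andP[ij jl]; have il := ltn_trans ij jl.
rewrite odd_agreement ?(ltn_eqF ij) // clash_stair_triple // !col_weight_stair_triple //.
case: (ltnP j 3) => j3.
  by case: i j ij j3 {il jl} => [|[|[|i]]] [|[|[|j]]] //= _ _; rewrite !negbK addbb.
rewrite /stair_triple j3 /= bool_neq0 (_ : j == 1 = false) ?andbF; last lia.
case: (ltnP i 3) => i3 /=.
  by case oj: (odd j) => /=; lia.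
rewrite bool_neq0 /stair ij ltnNge (ltnW ij) /=.
by case oi: (odd i); case oj: (odd j) => /=; lia.
Qed.

Lemma has_core_stair_triple l : 3 <= l -> l %% 4 = 2 -> has_core l (thm_type l).
Proof.
move=> l3 l4.
have x23 k : thm_type l k = if k == 2 then 3 else 2 by rewrite /thm_type l4.
apply: (has_core_of_matrix (f := stair_triple)) => [k _ | k i _ _ _ | k c kl | ];
  rewrite ?x23.
- by case: ifP.
- have [-> | k2] := eqVneq k 2; last exact: stair_triple_le1.
  by rewrite /stair_triple /=; case: ifP => //; case: i => [|[|[|]]].
- case: (ltnP k 3) => k3.
    case: k k3 kl => [|[|[|]]] // _ _; case: c => [|[|[|]]] // _;
      [exists 2 | exists 1 | exists 2 | exists 0 | exists 3 | exists 0 | exists 1] => //; lia.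
  rewrite gtn_eqF ?(leq_trans _ k3) // => c2; apply: onto01 => // b.
  have [bk | bk] := eqVneq b (odd k).
    by exists 0; [lia | rewrite /stair_triple k3 /= bk eqxx; lia].
  have [kl1 | kl1] := ltnP k.+1 l.
    exists k.+1 => //; rewrite /stair_triple k3 (leq_trans k3) // /stair ltnNge leqnSn /=.
    by move: bk; case: b; case: (odd k); lia.
  exists 3; [lia | rewrite /stair_triple k3 /= /stair; lia].
- exact: odd_agreements_stair_triple.
Qed.

Lemma thm_type_bounds l i : 1 <= thm_type l i <= 3 /\ thm_type l i <= 2 + (i == 2).
Proof.
by rewrite /thm_type; case: (l %% 4) => [|[|[|[|r]]]] /=;
  case: (i == 2); case: (i == 0); case: (i == l.-1).
Qed.

Lemma sum_thm_type l : 3 <= l -> \sum_(i < l) thm_type l i <= 2 * l + 1.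
Proof.
move=> l3; apply: (@leq_trans (\sum_(i < l) (2 + (i == 2 :> nat)))).
  by apply: leq_sum => i _; case: (thm_type_bounds l i).
rewrite big_split sum_nat_const card_ord /= (bigD1 (Ordinal l3)) //= big1 ?addn0 1?mulnC //.
by move=> i /eqP i2; case: eqP => // i2'; case: i2; apply: val_inj.
Qed.

Theorem mainTheorem10 (l : nat) (hl : 3 <= l) :
  (exists (T : finType) (C B : 'I_l -> {set T}) (x : 'I_l -> nat),
      is_core C B x /\ \sum_(i < l) x i <= 2 * l + 1 /\
      (forall i : 'I_l, 1 <= x i <= 3)) /\
  (exists (T : finType) (C B : 'I_l -> {set T}),
      is_core C B (fun i : 'I_l => thm_type l i)).
Proof.
have core : has_core l (thm_type l).
  have : l %% 4 < 4 by rewrite ltn_mod.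
  case l4: (l %% 4) => [|[|[|[|]]]] // _.
  - exact: has_core_stair_last.
  - exact: has_core_stair_ends.
  - exact: has_core_stair_triple.
  - exact: has_core_stair.
split; last exact: core.
have [T [C [B coreCB]]] := core.
exists T, C, B, (fun i : 'I_l => thm_type l i); split=> //; split.
  exact: sum_thm_type.
by move=> i; case: (thm_type_bounds l i).
Qed.
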